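(* Let $M\ge2$, let $\pi^\star$ lie in the interior of the simplex $\Delta_M$, and define $V:\mathbb R^{M-1}\to\mathbb R$ by $V(S)=\log\big(1+\sum_{k=1}^{M-1}e^{S^{(k)}}\big)-\langle S,\pi^\star_{-M}\rangle$, so that $\nabla V(S)=\pi_{-M}(S)-\pi^\star_{-M}$. Then there exist $c_\infty>0$ and $R<\infty$ such that $\|\nabla V(S)\|\ge c_\infty$ for all $S\notin C_R:=\{S:V(S)\le R\}$. Moreover such a $c_\infty$ can be chosen with $c_\infty\le\mathrm{dist}(\pi^\star,\partial\Delta_M)$, and in particular with $c_\infty\le\min_{1\le j\le M}\pi^\star_j$.
   Context: $\pi^\star_{-M}=(\pi^\star_1,\dots,\pi^\star_{M-1})$. $\pi(S)$ is the softmax map $\pi_k(S)=e^{S^{(k)}}/(1+\sum_{j=1}^{M-1}e^{S^{(j)}})$ for $k\le M-1$, $\pi_M(S)=1/(1+\sum_{j=1}^{M-1}e^{S^{(j)}})$, and $\pi_{-M}(S)=(\pi_1(S),\dots,\pi_{M-1}(S))$. $\partial\Delta_M$ is the relative boundary of the simplex. *)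

From mathcomp Require Import all_boot all_order all_algebra.
From mathcomp Require Import all_classical all_reals all_analysis.
Set Implicit Arguments. Unset Strict Implicit. Unset Printing Implicit Defensive.
Import Order.TTheory GRing.Theory Num.Theory.
Local Open Scope ring_scope.
Local Open Scope classical_set_scope.

Section Defs.
Variable R : realType.

Definition enorm (n : nat) (v : 'I_n -> R) : R :=
  Num.sqrt (\sum_(i < n) v i ^+ 2).

Definition in_simplex (M : nat) (x : 'I_M -> R) : Prop :=
  (forall j, 0 <= x j) /\ \sum_(j < M) x j = 1.
Definition in_simplex_interior (M : nat) (x : 'I_M -> R) : Prop :=
  (forall j, 0 < x j) /\ \sum_(j < M) x j = 1.

Definition simplex_relbd (M : nat) : set ('I_M -> R) :=
  [set x | in_simplex x /\ exists j, x j = 0].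

Definition dist_simplex_bd (M : nat) (p : 'I_M -> R) : R :=
  inf [set enorm (fun i => p i - x i) | x in @simplex_relbd M].

Definition lowidx (M : nat) (k : 'I_M.-1) : 'I_M := widen_ord (leq_pred M) k.

Definition Vfun (M : nat) (pistar : 'I_M -> R) (S : 'I_M.-1 -> R) : R :=
  ln (1 + \sum_(k < M.-1) expR (S k)) - \sum_(k < M.-1) S k * pistar (lowidx k).

Definition softmax_low (M : nat) (S : 'I_M.-1 -> R) (k : 'I_M.-1) : R :=
  expR (S k) / (1 + \sum_(j < M.-1) expR (S j)).

Definition gradV (M : nat) (pistar : 'I_M -> R) (S : 'I_M.-1 -> R) : 'I_M.-1 -> R :=
  fun k => softmax_low S k - pistar (lowidx k).

End Defs.

(* Let m be the smallest coordinate of pistar and c := m / (2 (M - 1)).  If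
   every coordinate of grad V(S) = pi_{-M}(S) - pistar_{-M} is at most c in
   absolute value, then every coordinate of the full softmax vector pi(S) is
   at least m / 2; for pi_M(S) = 1 - sum_{k<M} pi_k(S) this costs
   (M - 1) c = m / 2.  Since V(S) = - sum_j pistar_j log pi_j(S) is a cross
   entropy, V(S) <= - log (m / 2) there, so ||grad V|| >= c outside C_R for
   R = - log (m / 2).  Finally c <= m <= dist(pistar, boundary), as a boundary
   point has a zero coordinate. *)

From mathcomp Require Import all_boot all_order all_algebra.
From mathcomp Require Import all_classical all_reals all_analysis.
From mathcomp Require Import ring lra.
Set Implicit Arguments.
Unset Strict Implicit.
Unset Printing Implicit Defensive.
Import Order.TTheory GRing.Theory Num.Theory.
Local Open Scope ring_scope.

Section Softmax.
Variable R : realType.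

Lemma ler_norm_enorm (n : nat) (v : 'I_n -> R) (k : 'I_n) : `|v k| <= enorm v.
Proof.
rewrite /enorm -sqrtr_sqr ler_wsqrtr // (bigD1 k) //= lerDl.
by apply: sumr_ge0 => i _; rewrite sqr_ge0.
Qed.

Definition softmax_den (n : nat) (S : 'I_n -> R) : R :=
  1 + \sum_(k < n) expR (S k).

Lemma softmax_den_gt0 (n : nat) (S : 'I_n -> R) : 0 < softmax_den S.
Proof. by rewrite ltr_wpDr // sumr_ge0 // => k _; rewrite expR_ge0. Qed.

Lemma sum_softmax_low (M : nat) (S : 'I_M.-1 -> R) :
  \sum_(k < M.-1) softmax_low S k = 1 - (softmax_den S)^-1.
Proof.
have D0 : softmax_den S != 0 by rewrite gt_eqF ?softmax_den_gt0.
by rewrite -mulr_suml; move: D0; rewrite /softmax_den => D0; field.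
Qed.

Lemma sum_lowidx (n : nat) (f : 'I_n.+1 -> R) :
  \sum_(k < n) f (@lowidx n.+1 k) = \sum_(j < n.+1) f j - f ord_max.
Proof.
rewrite big_ord_recr /= addrK; apply: eq_bigr => k _.
by congr f; apply: val_inj.
Qed.

Section SmallGradient.
Variables (n : nat) (pistar : 'I_n.+1 -> R) (S : 'I_n.+1.-1 -> R) (c : R).
Hypothesis pistar_sum1 : \sum_(j < n.+1) pistar j = 1.
Hypothesis small_grad : forall k, `|gradV pistar S k| <= c.

Lemma softmax_low_ge_small_grad (k : 'I_n.+1.-1) :
  pistar (lowidx k) - c <= softmax_low S k.
Proof. by move: (small_grad k); rewrite /gradV ler_distl => /andP[]. Qed.

Lemma softmax_last_ge_small_grad :
  pistar ord_max - n%:R * c <= (softmax_den S)^-1.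
Proof.
have qle k : softmax_low S k <= pistar (lowidx k) + c.
  by move: (small_grad k); rewrite /gradV ler_distl => /andP[].
have : \sum_(k < n) softmax_low S k
       <= \sum_(k < n) (pistar (@lowidx n.+1 k) + c).
  by apply: ler_sum => k _; exact: qle.
rewrite (@sum_softmax_low n.+1) big_split /= sum_lowidx pistar_sum1.
rewrite sumr_const card_ord mulr_natl; lra.
Qed.

End SmallGradient.

(* Writing [S k = ln (softmax_low S k) + ln (softmax_den S)] turns [Vfun] into
   the cross entropy of [pistar] relative to the full softmax vector. *)
Lemma Vfun_le_softmax_lb (n : nat) (pistar : 'I_n.+1 -> R) (S : 'I_n.+1.-1 -> R)
    (a : R) :
  in_simplex pistar -> 0 < a ->
  (forall k, a <= softmax_low S k) -> a <= (softmax_den S)^-1 ->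
  Vfun pistar S <= - ln a.
Proof.
move=> [pistar_ge0 pistar_sum1] a_gt0 a_le_low a_le_last.
have D_gt0 := softmax_den_gt0 S.
set l := ln a + ln (softmax_den S).
have l_le0 : l <= 0.
  by rewrite /l -lnM ?posrE // ln_le0 // -ler_pdivlMr // mul1r.
have l_le_S k : l <= S k.
  rewrite /l -lnM ?posrE // -[S k]expRK ler_ln ?posrE ?mulr_gt0 ?expR_gt0 //.
  by rewrite -ler_pdivlMr //; exact: a_le_low.
have lowsum :
    l * (1 - pistar ord_max) <= \sum_(k < n) S k * pistar (@lowidx n.+1 k).
  rewrite -pistar_sum1 -sum_lowidx mulr_sumr; apply: ler_sum => k _.
  by rewrite ler_wpM2r.
have last_term : l * pistar ord_max <= 0 by rewrite mulr_le0_ge0.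
rewrite /Vfun -/(softmax_den S); move: lowsum last_term; rewrite /l; lra.
Qed.

Lemma dist_simplex_bd_ge (M : nat) (p : 'I_M -> R) (m : R) :
  (1 < M)%N -> (forall j, m <= p j) -> m <= dist_simplex_bd p.
Proof.
case: M p => [|[|n]] // p _ m_le; apply: lb_le_inf.
  set e0 := fun i : 'I_n.+2 => (i == ord0)%:R : R.
  exists (enorm (fun i => p i - e0 i)), e0 => //; split.
    split=> [j|]; first exact: ler0n.
    by rewrite /e0 (bigD1 ord0) //= big1 ?addr0 // => i /negbTE ->.
  by exists ord_max; rewrite /e0.
move=> _ [x [_ [j xj0]] <-]; apply: le_trans (m_le j) _.
have := ler_norm_enorm (fun i => p i - x i) j; rewrite /= xj0 subr0.
exact/le_trans/ler_norm.
Qed.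

End Softmax.

Theorem lemma3 (R : realType) (M : nat) (hM : (2 <= M)%N)
  (pistar : 'I_M -> R) (hpi : in_simplex_interior pistar) :
  exists (cinf Rb : R),
    0 < cinf /\
    (forall S : 'I_M.-1 -> R, ~ (Vfun pistar S <= Rb) ->
       cinf <= enorm (gradV pistar S)) /\
    cinf <= dist_simplex_bd pistar /\
    (forall j : 'I_M, cinf <= pistar j).
Proof.
case: M hM pistar hpi => [//|n] n_gt0 pistar [pistar_gt0 pistar_sum1].
have [m m_gt0 m_le] : exists2 m : R, 0 < m & forall j, m <= pistar j.
  have [j _ j_min] := @arg_minP _ _ _ ord0 xpredT pistar isT.
  by exists (pistar j) => // k; exact: j_min.
have n_pos : (0 : R) < n%:R by rewrite ltr0n.
set c := m / 2 / n%:R.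
have c_gt0 : 0 < c by rewrite !divr_gt0.
have nc : n%:R * c = m / 2 by rewrite /c mulrC divfK // gt_eqF.
have c_le : c <= m / 2.
  by rewrite /c ler_pdivrMr // ler_peMr ?ler1n // divr_ge0 // ltW.
exists c, (- ln (m / 2)); split=> //; split; [|split].
- move=> S V_gt; rewrite leNgt; apply/negP => grad_lt; apply: V_gt.
  have small k : `|gradV pistar S k| <= c.
    exact/ltW/(le_lt_trans (ler_norm_enorm _ k)).
  apply: Vfun_le_softmax_lb; first by split=> // j; exact: ltW.
  + by rewrite divr_gt0.
  + move=> k; apply: le_trans (softmax_low_ge_small_grad small k).
    by have := m_le (lowidx k); lra.
  + apply: le_trans (softmax_last_ge_small_grad pistar_sum1 small).
    by have := m_le ord_max; lra.
- by apply: le_trans (dist_simplex_bd_ge _ m_le) => //; lra.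
- by move=> j; apply: le_trans (m_le j); lra.
Qed.
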